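(* Let $K$ be a definable, definably compact subset of $R^n$. There exists a definable, definably compact subset $E$ of $({}^*\mathbf R)^n$ contained in $A_{\mathrm r}^n$ such that the symmetric difference of $\overline E$ and $K$ has dimension $\le n-1$.
   Context: Notation: ${}^*\mathbf R$ is the ultrapower of $\mathbf R$ along a fixed non-principal ultrafilter on $\mathbf C$ converging to $0$, $t$ the class of $(t)_t$; $a\in{}^*\mathbf R$ is $t$-bounded if $|a|\le|t|^{-N}$ for some integer $N\ge0$ and $t$-negligible if $|a|\le|t|^N$ for all $N\ge0$; $A_{\mathrm r}$ is the ring of $t$-bounded elements, $\mathfrak m_{\mathrm r}$ its maximal ideal of $t$-negligible elements, $R=A_{\mathrm r}/\mathfrak m_{\mathrm r}$ (a real closed field), and $\overline E$ is the image of $E$ under the reduction map $A_{\mathrm r}^n\to R^n$. ''Definable'' means semi-algebraic over the relevant real closed field; definable compactness is in the sense of o-minimal geometry (for semi-algebraic subsets of affine space: closed and bounded). *)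

From HB Require Import structures.
From mathcomp Require Import all_boot all_order all_algebra.
From mathcomp Require Import reals.
Set Implicit Arguments. Unset Strict Implicit. Unset Printing Implicit Defensive.
Import Order.TTheory GRing.Theory Num.Theory.
Local Open Scope ring_scope.

Section Defs.
Variable R : realType.

Definition cplx := (R * R)%type.
Definition cnorm (t : cplx) : R := Num.sqrt (t.1 ^+ 2 + t.2 ^+ 2).

Definition is_ultrafilter (U : (cplx -> Prop) -> Prop) : Prop :=
  [/\ U (fun _ => True),
      ~ U (fun _ => False),
      (forall A B : cplx -> Prop, (forall t, A t -> B t) -> U A -> U B),
      (forall A B : cplx -> Prop, U A -> U B -> U (fun t => A t /\ B t))
    & (forall A : cplx -> Prop, U A \/ U (fun t => ~ A t))].

Definition non_principal (U : (cplx -> Prop) -> Prop) : Prop :=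
  forall z : cplx, ~ U (fun t => t = z).

Definition converges_to_0 (U : (cplx -> Prop) -> Prop) : Prop :=
  forall eps : R, 0 < eps -> U (fun t => cnorm t < eps).

(* ---------- the ultrapower *R = R^C / U ----------
   Elements of *R are represented by functions C -> R; two representatives
   denote the same element iff they agree on a U-large set.  The ring
   operations and order of *R are pointwise modulo U. *)
Definition star := cplx -> R.

Definition tbounded (U : (cplx -> Prop) -> Prop) (a : star) : Prop :=
  exists N : nat, U (fun t => `|a t| <= (cnorm t) ^- N).

Definition tnegligible (U : (cplx -> Prop) -> Prop) (a : star) : Prop :=
  forall N : nat, U (fun t => `|a t| <= (cnorm t) ^+ N).

(* ---------- polynomial formulas (quantifier-free) ----------
   Polynomials in k variables with real constants; parameters of a
   definable set are passed as extra variables. *)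
Inductive pterm (k : nat) : Type :=
| PVar of 'I_k
| PConst of R
| PAdd of pterm k & pterm k
| POpp of pterm k
| PMul of pterm k & pterm k.

Inductive sform (k : nat) : Type :=
| FEq0 of pterm k
| FGt0 of pterm k
| FNot of sform k
| FAnd of sform k & sform k
| FOr of sform k & sform k.

Fixpoint peval (A : comRingType) (emb : R -> A) (k : nat) (e : 'I_k -> A)
  (p : pterm k) : A :=
  match p with
  | PVar i => e i
  | PConst c => emb c
  | PAdd p q => peval emb e p + peval emb e q
  | POpp p => - peval emb e p
  | PMul p q => peval emb e p * peval emb e q
  end.

Definition peval_star (k : nat) (e : 'I_k -> star) (p : pterm k) : star :=
  fun t => peval id (fun i => e i t) p.

Fixpoint holds_star (U : (cplx -> Prop) -> Prop) (k : nat) (e : 'I_k -> star)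
  (f : sform k) : Prop :=
  match f with
  | FEq0 p => U (fun t => peval_star e p t = 0)
  | FGt0 p => U (fun t => 0 < peval_star e p t)
  | FNot g => ~ holds_star U e g
  | FAnd g h => holds_star U e g /\ holds_star U e h
  | FOr g h => holds_star U e g \/ holds_star U e h
  end.

(* ---------- the residue field R_res = A_r / m_r ----------
   Elements are represented by t-bounded elements of *R; [a] = [b] iff a - b
   is t-negligible; [a] > 0 iff a > 0 and a is not t-negligible, i.e.
   a > |t|^N for some N. *)
Definition res_eq (U : (cplx -> Prop) -> Prop) (a b : star) : Prop :=
  tnegligible U (fun t => a t - b t).

Definition res_pos (U : (cplx -> Prop) -> Prop) (a : star) : Prop :=
  exists N : nat, U (fun t => (cnorm t) ^+ N < a t).

Definition res_lt (U : (cplx -> Prop) -> Prop) (a b : star) : Prop :=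
  res_pos U (fun t => b t - a t).

Fixpoint holds_res (U : (cplx -> Prop) -> Prop) (k : nat) (e : 'I_k -> star)
  (f : sform k) : Prop :=
  match f with
  | FEq0 p => tnegligible U (peval_star e p)
  | FGt0 p => res_pos U (peval_star e p)
  | FNot g => ~ holds_res U e g
  | FAnd g h => holds_res U e g /\ holds_res U e h
  | FOr g h => holds_res U e g \/ holds_res U e h
  end.

Definition joinv (A : Type) (n m : nat) (x : 'I_n -> A) (c : 'I_m -> A)
  : 'I_(n + m) -> A :=
  fun i => match split i with inl j => x j | inr j => c j end.

Definition star_definable (U : (cplx -> Prop) -> Prop) (n : nat)
  (E : ('I_n -> star) -> Prop) : Prop :=
  exists (m : nat) (f : sform (n + m)) (c : 'I_m -> star),
    forall x, E x <-> holds_star U (joinv x c) f.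

Definition star_bounded (U : (cplx -> Prop) -> Prop) (n : nat)
  (E : ('I_n -> star) -> Prop) : Prop :=
  exists M : star, forall x, E x -> forall i, U (fun t => `|x i t| <= M t).

Definition star_closed (U : (cplx -> Prop) -> Prop) (n : nat)
  (E : ('I_n -> star) -> Prop) : Prop :=
  forall x, ~ E x ->
    exists eps : star, U (fun t => 0 < eps t) /\
      forall y, (forall i, U (fun t => `|y i t - x i t| < eps t)) -> ~ E y.

Definition star_def_compact (U : (cplx -> Prop) -> Prop) (n : nat)
  (E : ('I_n -> star) -> Prop) : Prop :=
  star_closed U E /\ star_bounded U E.

(* ---------- subsets of R_res^n ----------
   A subset of R_res^n is given by a predicate on n-tuples of t-bounded
   representatives (its values on other tuples are irrelevant). *)
Definition tbvec (U : (cplx -> Prop) -> Prop) (n : nat) (x : 'I_n -> star) :=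
  forall i, tbounded U (x i).

Definition res_definable (U : (cplx -> Prop) -> Prop) (n : nat)
  (K : ('I_n -> star) -> Prop) : Prop :=
  exists (m : nat) (f : sform (n + m)) (c : 'I_m -> star),
    tbvec U c /\ forall x, tbvec U x -> (K x <-> holds_res U (joinv x c) f).

Definition res_bounded (U : (cplx -> Prop) -> Prop) (n : nat)
  (K : ('I_n -> star) -> Prop) : Prop :=
  exists M : star, tbounded U M /\
    forall x, tbvec U x -> K x -> forall i,
      ~ res_lt U M (x i) /\ ~ res_lt U (x i) (fun t => - M t).

Definition res_inbox (U : (cplx -> Prop) -> Prop) (n : nat)
  (x : 'I_n -> star) (eps : star) (y : 'I_n -> star) : Prop :=
  forall i, res_lt U (fun t => x i t - eps t) (y i) /\
            res_lt U (y i) (fun t => x i t + eps t).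

Definition res_closed (U : (cplx -> Prop) -> Prop) (n : nat)
  (K : ('I_n -> star) -> Prop) : Prop :=
  forall x, tbvec U x -> ~ K x ->
    exists eps : star, tbounded U eps /\ res_pos U eps /\
      forall y, tbvec U y -> res_inbox U x eps y -> ~ K y.

Definition res_def_compact (U : (cplx -> Prop) -> Prop) (n : nat)
  (K : ('I_n -> star) -> Prop) : Prop :=
  res_closed U K /\ res_bounded U K.

Definition reduction (U : (cplx -> Prop) -> Prop) (n : nat)
  (E : ('I_n -> star) -> Prop) : ('I_n -> star) -> Prop :=
  fun y => exists x, E x /\ forall i, res_eq U (x i) (y i).

Definition symdiff (n : nat) (A B : ('I_n -> star) -> Prop)
  : ('I_n -> star) -> Prop :=
  fun y => (A y /\ ~ B y) \/ (B y /\ ~ A y).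

(* ---------- dimension of a definable subset of R_res^n ----------
   dim S >= k iff some coordinate projection R_res^n -> R_res^k maps S onto
   a set with nonempty interior.  res_dim_lt U S k  means  dim S < k. *)
Definition res_proj_has_interior (U : (cplx -> Prop) -> Prop) (n k : nat)
  (S : ('I_n -> star) -> Prop) (s : 'I_k -> 'I_n) : Prop :=
  exists (z : 'I_k -> star) (eps : star),
    tbvec U z /\ tbounded U eps /\ res_pos U eps /\
    forall w, tbvec U w -> res_inbox U z eps w ->
      exists y, tbvec U y /\ S y /\ forall j, res_eq U (y (s j)) (w j).

Definition res_dim_lt (U : (cplx -> Prop) -> Prop) (n : nat)
  (S : ('I_n -> star) -> Prop) (k : nat) : Prop :=
  forall s : 'I_k -> 'I_n, injective s -> ~ res_proj_has_interior U S s.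

End Defs.

(* Write K as the set of t-bounded points where a quantifier-free formula f with
   t-bounded parameters holds in R_res. Call an atom of f null if it is
   t-negligible at every t-bounded point, and a point generic if no non-null atom
   is t-negligible there. Replacing null atoms by their truth value, pushing
   negations to the atoms and reading the remaining atoms p = 0 and p > 0 as the
   closed conditions p = 0 and p >= 0 in *R turns f into a closed formula; cut
   down to a box containing K it defines a closed bounded set E. At a generic
   point the sign of each atom in *R is its sign in R_res, so the reduction of E
   agrees with K there. Non-generic points contain no box: a non-null atom is
   non-negligible at some point, hence, by interpolation along a short segment,
   at some point of any given box, and then, by a Lipschitz estimate, on a whole
   sub-box. *)

From HB Require Import structures.
From mathcomp Require Import all_boot all_order all_algebra.
From mathcomp Require Import boolp reals.
From mathcomp Require Import ring lra.
Set Implicit Arguments. Unset Strict Implicit. Unset Printing Implicit Defensive.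
Import Order.TTheory GRing.Theory Num.Theory.
Local Open Scope ring_scope.

Lemma joinv_lshift (A : Type) n m (x : 'I_n -> A) (c : 'I_m -> A) j :
  joinv x c (lshift m j) = x j.
Proof. by rewrite /joinv -[lshift m j]/(unsplit (inl j)) unsplitK. Qed.

Lemma joinv_rshift (A : Type) n m (x : 'I_n -> A) (c : 'I_m -> A) j :
  joinv x c (rshift n j) = c j.
Proof. by rewrite /joinv -[rshift n j]/(unsplit (inr j)) unsplitK. Qed.

Lemma horner_factor_at (F : fieldType) (g : {poly F}) (c : F) d :
  (size g <= d.+1)%N ->
  exists h : {poly F}, (size h <= d)%N /\ forall y, g.[y] = g.[c] + (y - c) * h.[y].
Proof.
move=> gd; have Xc_neq0 : 'X - c%:P != 0 by rewrite -size_poly_eq0 size_XsubC.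
have dvd : 'X - c%:P %| g - g.[c]%:P by rewrite dvdp_XsubCl rootE !hornerE subrr.
exists ((g - g.[c]%:P) %/ ('X - c%:P)); split=> [|y].
  rewrite size_divp // size_XsubC leq_subLR add1n.
  by rewrite (leq_trans (size_polyD _ _)) // size_polyN geq_max gd (leq_trans (size_polyC_leq1 _)).
have := congr1 (horner^~ y) (divpK dvd).
rewrite /= hornerM hornerXsubC hornerD hornerN hornerC => factor.
by rewrite [(y - c) * _]mulrC factor addrC subrK.
Qed.

(** * Polynomial terms and formulas *)

Section Terms.
Variable R : realType.
Implicit Types (B d : R).

Fixpoint pbound k (p : pterm R k) B : R :=
  match p with
  | PVar _ => B
  | PConst c => `|c|
  | PAdd p q => pbound p B + pbound q B
  | POpp p => pbound p B
  | PMul p q => pbound p B * pbound q B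
  end.

Fixpoint plip k (p : pterm R k) B : R :=
  match p with
  | PVar _ => 1
  | PConst _ => 0
  | PAdd p q => plip p B + plip q B
  | POpp p => plip p B
  | PMul p q => pbound p B * plip q B + pbound q B * plip p B
  end.

Lemma pbound_ge0 k (p : pterm R k) B : 0 <= B -> 0 <= pbound p B.
Proof.
by move=> hB; elim: p => //= [p hp q hq|p hp q hq]; [apply: addr_ge0|apply: mulr_ge0].
Qed.

Lemma plip_ge0 k (p : pterm R k) B : 0 <= B -> 0 <= plip p B.
Proof.
move=> hB; elim: p => //= [p hp q hq|p hp q hq]; first exact: addr_ge0.
by apply: addr_ge0; apply: mulr_ge0 => //; apply: pbound_ge0.
Qed.

Lemma peval_bound k (e : 'I_k -> R) (p : pterm R k) B :
  (forall i, `|e i| <= B) -> `|peval id e p| <= pbound p B.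
Proof.
move=> he; elim: p => //= [p hp q hq|p hp|p hp q hq].
- exact: le_trans (ler_normD _ _) (lerD hp hq).
- by rewrite normrN.
- by rewrite normrM; apply: ler_pM.
Qed.

Lemma peval_lipschitz k (e e' : 'I_k -> R) (p : pterm R k) B d :
  0 <= d -> (forall i, `|e i| <= B) -> (forall i, `|e' i| <= B) ->
  (forall i, `|e i - e' i| <= d) ->
  `|peval id e p - peval id e' p| <= plip p B * d.
Proof.
move=> hd he he' hee; elim: p => /= [i|c|p hp q hq|p hp|p hp q hq].
- by rewrite mul1r.
- by rewrite subrr normr0 mul0r.
- rewrite opprD addrACA mulrDl; exact: le_trans (ler_normD _ _) (lerD hp hq).
- by rewrite -opprD normrN.
- set P := peval id e p; set P' := peval id e' p.
  set Q := peval id e q; set Q' := peval id e' q.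
  have -> : P * Q - P' * Q' = P * (Q - Q') + Q' * (P - P') by ring.
  apply: le_trans (ler_normD _ _) _; rewrite !normrM mulrDl -!mulrA.
  by apply: lerD; apply: ler_pM => //; apply: peval_bound.
Qed.

Lemma peval_gt0_near k (e : 'I_k -> R) (p : pterm R k) : 0 < peval id e p ->
  exists2 eta, 0 < eta &
    forall e', (forall i, `|e' i - e i| < eta) -> 0 < peval id e' p.
Proof.
set q := peval id e p => hq.
set B := 1 + \sum_j `|e j|; set L := plip p B.
have hsum i : `|e i| <= \sum_j `|e j|.
  by rewrite (bigD1 i) //= lerDl sumr_ge0.
have hB : 0 <= B by rewrite addr_ge0 ?sumr_ge0.
have hL : 0 <= L by apply: plip_ge0.
pose eta := Num.min 1 (q / (L + 1)).
have eta_gt0 : 0 < eta by rewrite lt_min ltr01 divr_gt0 //; lra.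
have eta_le1 : eta <= 1 by rewrite ge_min lexx.
have etaL : eta * (L + 1) <= q.
  by rewrite -ler_pdivlMr ?ge_min ?lexx ?orbT //; lra.
exists eta => // e' he'.
have he i : `|e i| <= B by have := hsum i; rewrite /B; lra.
have he'B i : `|e' i| <= B.
  have := ler_normD (e' i - e i) (e i); rewrite subrK.
  by have := he' i; have := hsum i; rewrite /B; lra.
have hee i : `|e i - e' i| <= eta by rewrite distrC ltW.
have := peval_lipschitz p (ltW eta_gt0) he he'B hee; rewrite -/q -/L => hlip.
have := ler_norm (q - peval id e' p); move: etaL; rewrite mulrDr mulr1.
nra.
Qed.

Fixpoint sat k (e : 'I_k -> R) (f : sform R k) : Prop :=
  match f with
  | FEq0 p => peval id e p = 0
  | FGt0 p => 0 < peval id e p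
  | FNot g => ~ sat e g
  | FAnd g h => sat e g /\ sat e h
  | FOr g h => sat e g \/ sat e h
  end.

Fixpoint closed_form k (f : sform R k) : bool :=
  match f with
  | FNot (FGt0 _) => true
  | FAnd g h | FOr g h => closed_form g && closed_form h
  | _ => false
  end.

Lemma not_sat_closed_form_near k (f : sform R k) (e : 'I_k -> R) :
  closed_form f -> ~ sat e f ->
  exists2 eta, 0 < eta & forall e', (forall i, `|e' i - e i| < eta) -> ~ sat e' f.
Proof.
elim: f => //= [g _|g IHg h IHh /andP[cg ch]|g IHg h IHh /andP[cg ch]].
- case: g => // p _ /contrapT hp.
  have [eta eta_gt0 near] := peval_gt0_near hp.
  by exists eta => // e' /near hp' /(_ hp').
- by case/not_andP => [/(IHg cg)|/(IHh ch)] [eta eta_gt0 near];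
    exists eta => // e' /near + [].
- case/not_orP => /(IHg cg) [eta1 eta1_gt0 near1] /(IHh ch) [eta2 eta2_gt0 near2].
  exists (Num.min eta1 eta2) => [|e' he']; first by rewrite lt_min eta1_gt0.
  have [le1 le2] : Num.min eta1 eta2 <= eta1 /\ Num.min eta1 eta2 <= eta2.
    by rewrite !ge_min !lexx ?orbT.
  by case; [apply: near1|apply: near2] => i; apply: lt_le_trans (he' i) _.
Qed.

Fixpoint pdeg k (p : pterm R k) : nat :=
  match p with
  | PVar _ => 1
  | PConst _ => 0
  | PAdd p q => maxn (pdeg p) (pdeg q)
  | POpp p => pdeg p
  | PMul p q => pdeg p + pdeg q
  end.

Lemma horner_peval k (E : 'I_k -> {poly R}) (p : pterm R k) s :
  (peval polyC E p).[s] = peval id (fun i => (E i).[s]) p.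
Proof.
by elim: p => //= [c|p hp q hq|p hp|p hp q hq]; rewrite ?hornerC ?hornerD ?hornerN ?hornerM ?hp ?hq.
Qed.

Lemma size_peval k (E : 'I_k -> {poly R}) (p : pterm R k) :
  (forall i, (size (E i) <= 2)%N) -> (size (peval polyC E p) <= (pdeg p).+1)%N.
Proof.
move=> hE; elim: p => /= [i|c|p hp q hq|p hp|p hp q hq].
- exact: hE.
- exact: size_polyC_leq1.
- apply: leq_trans (size_polyD _ _) _; rewrite geq_max.
  by rewrite (leq_trans hp) ?(leq_trans hq) // ltnS ?leq_maxl ?leq_maxr.
- by rewrite size_polyN.
- apply: leq_trans (size_polyMleq _ _) _.
  by rewrite -subn1 leq_subLR add1n -addnS -addSn leq_add.
Qed.

Fixpoint pren k k' (r : 'I_k -> 'I_k') (p : pterm R k) : pterm R k' :=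
  match p with
  | PVar i => PVar R (r i)
  | PConst c => PConst k' c
  | PAdd p q => PAdd (pren r p) (pren r q)
  | POpp p => POpp (pren r p)
  | PMul p q => PMul (pren r p) (pren r q)
  end.

Fixpoint sren k k' (r : 'I_k -> 'I_k') (f : sform R k) : sform R k' :=
  match f with
  | FEq0 p => FEq0 (pren r p)
  | FGt0 p => FGt0 (pren r p)
  | FNot g => FNot (sren r g)
  | FAnd g h => FAnd (sren r g) (sren r h)
  | FOr g h => FOr (sren r g) (sren r h)
  end.

Lemma peval_pren (A : comNzRingType) (emb : R -> A) k k' (r : 'I_k -> 'I_k')
    (e : 'I_k' -> A) (p : pterm R k) :
  peval emb e (pren r p) = peval emb (e \o r) p.
Proof. by elim: p => //= [p -> q ->|p ->|p -> q ->]. Qed.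

Lemma closed_form_sren k k' (r : 'I_k -> 'I_k') (f : sform R k) :
  closed_form (sren r f) = closed_form f.
Proof. by elim: f => //= [[]|g -> h ->|g -> h ->]. Qed.

Lemma peval_star_pren k k' (r : 'I_k -> 'I_k') (e : 'I_k' -> star R) (p : pterm R k) :
  peval_star e (pren r p) = peval_star (e \o r) p.
Proof. by apply: funext => t; apply: peval_pren. Qed.

Lemma holds_star_sren (U : (cplx R -> Prop) -> Prop) k k' (r : 'I_k -> 'I_k') (e : 'I_k' -> star R) (f : sform R k) :
  holds_star U e (sren r f) <-> holds_star U (e \o r) f.
Proof.
elim: f => /= [p|p|g IH|g IHg h IHh|g IHg h IHh].
1,2: by rewrite peval_star_pren.
- by rewrite IH.
- by rewrite IHg IHh.
- by rewrite IHg IHh.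
Qed.

(* Truth values as negated strict inequalities, so that they are closed formulas. *)
Definition sform_bool k (b : bool) : sform R k :=
  FNot (FGt0 (PConst k (if b then 0 else 1))).

Definition box_form n k (xi : 'I_n -> 'I_k) (iW : 'I_k) (s : seq 'I_n) : sform R k :=
  let le_W p := FNot (FGt0 (PAdd p (POpp (PVar R iW)))) in
  foldr (fun i g => FAnd (FAnd (le_W (PVar R (xi i))) (le_W (POpp (PVar R (xi i))))) g)
        (sform_bool k true) s.

Lemma closed_form_box n k (xi : 'I_n -> 'I_k) (iW : 'I_k) (s : seq 'I_n) :
  closed_form (box_form xi iW s).
Proof. by elim: s. Qed.

End Terms.

Arguments sform_bool {R} k b.
Arguments box_form {R n k} xi iW s.

(** * The ultrapower and the residue field *)

Section Ultrapower.
Variables (R : realType) (U : (cplx R -> Prop) -> Prop).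
Hypotheses (hU : is_ultrafilter U) (hnp : non_principal U) (h0 : converges_to_0 U).
Implicit Types A B : cplx R -> Prop.

Lemma ufS A B : (forall t, A t -> B t) -> U A -> U B.
Proof. by case: hU => _ _ + _ _; apply. Qed.

Lemma ufI A B : U A -> U B -> U (fun t => A t /\ B t).
Proof. by case: hU => _ _ _ + _; apply. Qed.

Lemma ufT A : (forall t, A t) -> U A.
Proof. by move=> hA; case: hU => + _ _ _ _; apply: ufS. Qed.

Lemma uf_notI A : U A -> ~ U (fun t => ~ A t).
Proof.
move=> hA hnA; case: hU => _ + _ _ _; apply.
by apply: ufS (ufI hA hnA) => t [].
Qed.

Lemma ufC A : ~ U A -> U (fun t => ~ A t).
Proof. by case: hU => _ _ _ _ /(_ A) []. Qed.

Lemma ufU A B : U (fun t => A t \/ B t) -> U A \/ U B.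
Proof.
move=> hAB; apply: contrapT => /not_orP[/ufC hA /ufC hB].
by apply: (uf_notI hAB); apply: ufS (ufI hA hB) => t [? ?] [].
Qed.

Lemma uf_forall k (P : 'I_k -> cplx R -> Prop) :
  (forall i, U (P i)) -> U (fun t => forall i, P i t).
Proof.
move=> hP; suff: U (fun t => forall i, i \in enum 'I_k -> P i t).
  by apply: ufS => t hi i; apply: hi; rewrite mem_enum.
elim: (enum 'I_k) => [|j s IH]; first exact: ufT.
apply: ufS (ufI (hP j) IH) => t [hj hs] i; rewrite inE => /orP[/eqP-> //|].
exact: hs.
Qed.

Lemma uf_exists_uniform k (Q : 'I_k -> nat -> cplx R -> Prop) :
  (forall i N N' t, (N <= N')%N -> Q i N t -> Q i N' t) ->
  (forall i, exists N, U (Q i N)) -> exists N, U (fun t => forall i, Q i N t).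
Proof.
move=> Qmono hQ.
have [N hN] : exists N, forall i, i \in enum 'I_k -> U (Q i N).
  elim: (enum 'I_k) => [|j s [N IH]]; first by exists 0%N.
  have [Nj hNj] := hQ j; exists (maxn N Nj) => i; rewrite inE => /orP[/eqP->|/IH].
    by apply: ufS hNj => t; apply: Qmono; rewrite leq_maxr.
  by apply: ufS => t; apply: Qmono; rewrite leq_maxl.
by exists N; apply: uf_forall => i; apply: hN; rewrite mem_enum.
Qed.

Lemma cnorm_ge0 (t : cplx R) : 0 <= cnorm t.
Proof. exact: sqrtr_ge0. Qed.

Lemma cnorm_gt0 (t : cplx R) : t <> (0, 0) -> 0 < cnorm t.
Proof.
case: t => x y neq; rewrite /cnorm sqrtr_gt0 lt_neqAle addr_ge0 ?sqr_ge0 // andbT.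
rewrite eq_sym paddr_eq0 ?sqr_ge0 // !sqrf_eq0.
by apply/negP => /andP[/eqP /= x0 /eqP /= y0]; apply: neq; rewrite x0 y0.
Qed.

Lemma uf_cnorm_lt r : 0 < r -> U (fun t => 0 < cnorm t /\ cnorm t < r).
Proof.
move=> r_gt0; apply: ufS (ufI (ufC (@hnp (0, 0))) (h0 r_gt0)) => t [t0 tr].
by split; first exact: cnorm_gt0.
Qed.

Lemma uf_cnorm_half : U (fun t => 0 < cnorm t /\ cnorm t <= 2^-1).
Proof.
have half_gt0 : 0 < 2^-1 :> R by rewrite invr_gt0.
by apply: ufS (uf_cnorm_lt half_gt0) => t [? /ltW].
Qed.

Lemma ler_invX_mul (c y : R) N : 0 < c -> (y <= c ^- N) = (y * c ^+ N <= 1).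
Proof. by move=> c_gt0; rewrite -[_ ^- N]mul1r ler_pdivlMr ?exprn_gt0. Qed.

Lemma tboundedE (x : star R) :
  tbounded U x <-> exists N, U (fun t => `|x t| * cnorm t ^+ N <= 1).
Proof.
by split=> -[N hN]; exists N; apply: ufS (ufI hN uf_cnorm_half) => t [+ [t_gt0 _]];
  rewrite ler_invX_mul.
Qed.

Lemma tbounded_mono (x : star R) N M : (N <= M)%N ->
  U (fun t => `|x t| * cnorm t ^+ N <= 1) -> U (fun t => `|x t| * cnorm t ^+ M <= 1).
Proof.
move=> NM hN; apply: ufS (ufI hN uf_cnorm_half) => t [xN [t_gt0 t_le]].
apply: le_trans xN; rewrite ler_wpM2l // ler_wiXn2l //; lra.
Qed.

Lemma tbounded_le (x y : star R) :
  U (fun t => `|x t| <= `|y t|) -> tbounded U y -> tbounded U x.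
Proof.
move=> xy [N hN]; exists N.
by apply: ufS (ufI hN xy) => t [yN /le_trans]; apply.
Qed.

Lemma eq_tbounded (x y : star R) :
  U (fun t => x t = y t) -> tbounded U y -> tbounded U x.
Proof. by move=> xy; apply: tbounded_le; apply: ufS xy => t ->. Qed.

Lemma tboundedN (x : star R) : tbounded U x -> tbounded U (fun t => - x t).
Proof. by apply: tbounded_le; apply: ufT => t; rewrite normrN. Qed.

Lemma uf_mul_cnorm_le1 (r : R) : U (fun t => r * cnorm t <= 1).
Proof.
have r1_gt0 : 0 < `|r| + 1 by rewrite ltr_wpDl.
apply: ufS (uf_cnorm_lt (_ : 0 < (`|r| + 1)^-1)) => [t [t_gt0]|]; last by rewrite invr_gt0.
rewrite -[_^-1]mul1r ltr_pdivlMr // => tr.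
by have := ler_norm r; nra.
Qed.

Lemma tboundedC (c : R) : tbounded U (fun _ => c).
Proof.
by apply/tboundedE; exists 1%N; apply: ufS (uf_mul_cnorm_le1 `|c|) => t; rewrite expr1.
Qed.

Lemma tboundedD (x y : star R) :
  tbounded U x -> tbounded U y -> tbounded U (fun t => x t + y t).
Proof.
move=> /tboundedE[N hN] /tboundedE[M hM]; apply/tboundedE; exists (maxn N M).+1.
have hx := tbounded_mono (leq_maxl N M) hN; have hy := tbounded_mono (leq_maxr N M) hM.
apply: ufS (ufI (ufI hx hy) uf_cnorm_half) => t [[xP yP] [t_gt0 t_le]].
move: xP yP; rewrite exprSr mulrA; set P := cnorm t ^+ maxn N M => xP yP.
have P_gt0 : 0 < P by rewrite exprn_gt0.
have : `|x t + y t| * P <= 2.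
  by apply: le_trans (ler_wpM2r (ltW P_gt0) (ler_normD _ _)) _; rewrite mulrDl; lra.
have : 0 <= `|x t + y t| * P by rewrite mulr_ge0 // ltW.
nra.
Qed.

Lemma tboundedM (x y : star R) :
  tbounded U x -> tbounded U y -> tbounded U (fun t => x t * y t).
Proof.
move=> /tboundedE[N hN] /tboundedE[M hM]; apply/tboundedE; exists (N + M)%N.
apply: ufS (ufI (ufI hN hM) uf_cnorm_half) => t [[xN yM] [t_gt0 _]].
rewrite normrM exprD mulrACA.
have : 0 <= `|x t| * cnorm t ^+ N by rewrite mulr_ge0 // exprn_ge0 // ltW.
by move: xN yM; set u := `|x t| * _; set v := `|y t| * _; nra.
Qed.

Lemma tbounded_cnormV N : tbounded U (fun t => cnorm t ^- N).
Proof.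
apply/tboundedE; exists N; apply: ufS uf_cnorm_half => t [t_gt0 _].
have tN_gt0 : 0 < cnorm t ^+ N := exprn_gt0 N t_gt0.
by rewrite ger0_norm ?invr_ge0 ?(ltW tN_gt0) // mulVf // gt_eqF.
Qed.

Lemma tbounded_cnorm N : tbounded U (fun t => cnorm t ^+ N).
Proof.
apply/tboundedE; exists 0%N; apply: ufS uf_cnorm_half => t [t_gt0 t_le].
rewrite expr0 mulr1 ger0_norm ?exprn_ge0 ?(ltW t_gt0) //.
by apply: exprn_ile1; [exact: ltW | lra].
Qed.

Lemma tbvec_uniform k (e : 'I_k -> star R) : tbvec U e ->
  exists N, forall M, (N <= M)%N -> U (fun t => forall i, `|e i t| <= cnorm t ^- M).
Proof.
move=> he; have [N hN] : exists N, U (fun t => forall i,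
    0 < cnorm t <= 2^-1 -> `|e i t| * cnorm t ^+ N <= 1).
  apply: uf_exists_uniform => [i N M t NM eN ht|i].
    apply: le_trans (eN ht); case/andP: ht => t_gt0 t_le.
    by rewrite ler_wpM2l // ler_wiXn2l //; lra.
  by have /tboundedE[N hN] := he i; exists N; apply: ufS hN => t.
exists N => M NM; apply: ufS (ufI hN uf_cnorm_half) => t [eN [t_gt0 t_le]] i.
rewrite ler_invX_mul //; apply: le_trans (eN i _); last by rewrite t_gt0.
by rewrite ler_wpM2l // ler_wiXn2l //; lra.
Qed.

Lemma tnegligible_le (x y : star R) :
  U (fun t => `|x t| <= `|y t|) -> tnegligible U y -> tnegligible U x.
Proof. by move=> xy hy N; apply: ufS (ufI (hy N) xy) => t [yN /le_trans]; apply. Qed.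

Lemma eq_tnegligible (x y : star R) :
  U (fun t => x t = y t) -> tnegligible U y -> tnegligible U x.
Proof. by move=> xy; apply: tnegligible_le; apply: ufS xy => t ->. Qed.

Lemma tnegligible0 : tnegligible U (fun _ => 0).
Proof. by move=> N; apply: ufT => t; rewrite normr0 exprn_ge0 ?cnorm_ge0. Qed.

Lemma tnegligibleN (x : star R) : tnegligible U x -> tnegligible U (fun t => - x t).
Proof. by apply: tnegligible_le; apply: ufT => t; rewrite normrN. Qed.

Lemma tnegligibleD (x y : star R) :
  tnegligible U x -> tnegligible U y -> tnegligible U (fun t => x t + y t).
Proof.
move=> hx hy N; apply: ufS (ufI (ufI (hx N.+1) (hy N.+1)) uf_cnorm_half).
move=> t [[]]; rewrite exprSr => xN yN [t_gt0 t_le].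
have := ler_normD (x t) (y t); have := exprn_gt0 N t_gt0; nra.
Qed.

Lemma tnegligibleM (x y : star R) :
  tnegligible U x -> tbounded U y -> tnegligible U (fun t => x t * y t).
Proof.
move=> hx /tboundedE[M hM] N.
apply: ufS (ufI (ufI (hx (N + M)%N) hM) uf_cnorm_half) => t [[]].
rewrite exprD normrM => xNM yM [t_gt0 _].
have := exprn_gt0 N t_gt0; have := exprn_gt0 M t_gt0.
have := normr_ge0 (x t); have := normr_ge0 (y t); nra.
Qed.

Lemma not_tnegligible (x : star R) :
  ~ tnegligible U x -> exists N, U (fun t => cnorm t ^+ N < `|x t|).
Proof.
move=> /existsNP[N /ufC hN]; exists N.
by apply: ufS hN => t; rewrite ltNge => /negP.
Qed.

Lemma res_eq_sym (x y : star R) : res_eq U x y -> res_eq U y x.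
Proof. by move/tnegligibleN; apply: eq_tnegligible; apply: ufT => t; rewrite opprB. Qed.

Lemma res_eq_refl (x : star R) : res_eq U x x.
Proof. by apply: eq_tnegligible tnegligible0; apply: ufT => t; rewrite subrr. Qed.

Lemma tnegligible_res_eq (x y : star R) :
  res_eq U x y -> tnegligible U x -> tnegligible U y.
Proof.
move=> xy hx; apply: eq_tnegligible (tnegligibleD hx (tnegligibleN xy)).
by apply: ufT => t; rewrite opprB addrC subrK.
Qed.

Lemma res_pos_le (x y : star R) : U (fun t => x t <= y t) -> res_pos U x -> res_pos U y.
Proof. by move=> xy [N hN]; exists N; apply: ufS (ufI hN xy) => t [/lt_le_trans]; apply. Qed.

Lemma res_pos_gt0 (x : star R) : res_pos U x -> U (fun t => 0 < x t).
Proof.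
move=> [N hN]; apply: ufS (ufI hN uf_cnorm_half) => t [+ [t_gt0 _]].
exact/lt_trans/exprn_gt0.
Qed.

Lemma tnegligible_res_pos (x : star R) : tnegligible U x -> ~ res_pos U x.
Proof.
move=> hx [N hN]; apply: (uf_notI (ufI hN (hx N))); apply: ufT => t [].
by have := ler_norm (x t); lra.
Qed.

Lemma res_pos_cnorm N : res_pos U (fun t => cnorm t ^+ N).
Proof.
exists N.+1; apply: ufS uf_cnorm_half => t [t_gt0 t_le].
by rewrite exprSr gtr_pMr ?exprn_gt0 //; lra.
Qed.

Lemma res_pos_half (x : star R) : res_pos U x -> res_pos U (fun t => x t / 2).
Proof.
move=> [N hN]; exists N.+1; apply: ufS (ufI hN uf_cnorm_half) => t [xN [t_gt0 t_le]].
rewrite exprSr; have := exprn_gt0 N t_gt0; move: xN; set P := cnorm t ^+ N; nra.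
Qed.

Lemma res_pos_min (x y : star R) :
  res_pos U x -> res_pos U y -> res_pos U (fun t => Num.min (x t) (y t)).
Proof.
move=> [N hN] [M hM]; exists (maxn N M).
apply: ufS (ufI (ufI hN hM) uf_cnorm_half) => t [[xN yM] [t_gt0 t_le]].
have t_le1 : cnorm t <= 1 by lra.
have t_ge0 := ltW t_gt0.
by rewrite lt_min (le_lt_trans _ xN) ?(le_lt_trans _ yM) // ler_wiXn2l ?leq_maxl ?leq_maxr.
Qed.

Lemma res_pos_res_eq (x y : star R) : res_eq U x y -> res_pos U x -> res_pos U y.
Proof.
move=> xy [N hN]; exists N.+1.
apply: ufS (ufI (ufI hN (xy N.+1)) uf_cnorm_half) => t [[xN]].
rewrite exprSr => xyN [t_gt0 t_le].
have := ler_norm (x t - y t); have := exprn_gt0 N t_gt0.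
by move: xN xyN; set P := cnorm t ^+ N; nra.
Qed.

Lemma tboundedV (x : star R) : res_pos U x -> tbounded U (fun t => (x t)^-1).
Proof.
move=> [N hN]; apply: tbounded_le (tbounded_cnormV N).
apply: ufS (ufI hN uf_cnorm_half) => t [xN [t_gt0 _]].
have tN_gt0 := exprn_gt0 N t_gt0; have x_gt0 := lt_trans tN_gt0 xN.
by rewrite !ger0_norm ?invr_ge0 ?(ltW x_gt0) ?(ltW tN_gt0) // lef_pV2 ?posrE // ltW.
Qed.

Lemma tbvec_joinv n m (x : 'I_n -> star R) (c : 'I_m -> star R) :
  tbvec U x -> tbvec U c -> tbvec U (joinv x c).
Proof. by move=> hx hc i; rewrite /joinv; case: (split i). Qed.

Lemma tbounded_pbound k (p : pterm R k) (B : star R) :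
  tbounded U B -> tbounded U (fun t => pbound p (B t)).
Proof.
move=> hB; elim: p => //= [c|p hp q hq|p hp q hq].
- exact: tboundedC.
- exact: tboundedD.
- exact: tboundedM.
Qed.

Lemma tbounded_plip k (p : pterm R k) (B : star R) :
  tbounded U B -> tbounded U (fun t => plip p (B t)).
Proof.
move=> hB; elim: p => /= [i|c|p hp q hq|p hp|p hp q hq] //; try exact: tboundedC.
- exact: tboundedD.
- by apply: tboundedD; apply: tboundedM => //; apply: tbounded_pbound.
Qed.

Lemma peval_star_lipschitz k (e : 'I_k -> star R) (p : pterm R k) N : tbvec U e ->
  exists K, forall e', U (fun t => forall i, `|e' i t - e i t| < cnorm t ^+ K) ->
    U (fun t => `|peval_star e' p t - peval_star e p t| <= cnorm t ^+ N).
Proof.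
move=> /tbvec_uniform[N0 /(_ N0 (leqnn N0)) eN0].
have /tboundedE[K0 LK0] := tbounded_plip p (tboundedD (tbounded_cnormV N0) (tboundedC 1)).
exists (N + K0)%N => e' e'e.
apply: ufS (ufI (ufI eN0 LK0) (ufI e'e uf_cnorm_half)) => t [[eB LK] [e'eK [t_gt0 t_le]]].
set B := cnorm t ^- N0 + 1 in LK *.
have tK_le1 : cnorm t ^+ (N + K0) <= 1 by rewrite exprn_ile1 ?ltW //; lra.
have e'B i : `|e' i t| <= B.
  have := ler_normD (e' i t - e i t) (e i t); rewrite subrK => /le_trans; apply.
  by rewrite addrC lerD ?(le_trans (ltW (e'eK i))).
have ee'K i : `|e i t - e' i t| <= cnorm t ^+ (N + K0) by rewrite distrC ltW.
have eB' i : `|e i t| <= B by rewrite (le_trans (eB i)) ?lerDl.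
rewrite distrC; apply: le_trans (peval_lipschitz p (exprn_ge0 _ (ltW t_gt0)) eB' e'B ee'K) _.
have B_ge0 : 0 <= B by rewrite addr_ge0 ?invr_ge0 ?exprn_ge0 ?(ltW t_gt0).
move: LK; rewrite ger0_norm ?plip_ge0 // => LK.
by rewrite exprD mulrCA -[leRHS]mulr1 ler_wpM2l // exprn_ge0 // ltW.
Qed.

Lemma uf_res_eq_lt k (e e' : 'I_k -> star R) K : (forall i, res_eq U (e i) (e' i)) ->
  U (fun t => forall i, `|e' i t - e i t| < cnorm t ^+ K).
Proof.
move=> ee'; apply: uf_forall => i.
apply: ufS (ufI (ee' i K.+1) uf_cnorm_half) => t [+ [t_gt0 t_le]].
rewrite distrC exprSr => /le_lt_trans; apply.
by rewrite gtr_pMr ?exprn_gt0 //; lra.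
Qed.

Lemma res_eq_peval k (e e' : 'I_k -> star R) (p : pterm R k) :
  tbvec U e -> (forall i, res_eq U (e i) (e' i)) ->
  res_eq U (peval_star e p) (peval_star e' p).
Proof.
move=> he ee' N; have [K near] := peval_star_lipschitz p N he.
by apply: ufS (near _ (uf_res_eq_lt K ee')) => t; rewrite distrC.
Qed.

Lemma holds_starE k (e : 'I_k -> star R) (f : sform R k) :
  holds_star U e f <-> U (fun t => sat (fun i => e i t) f).
Proof.
elim: f => //= [g IH|g IHg h IHh|g IHg h IHh].
- rewrite IH; split=> [/ufC|+ hg] //; exact: uf_notI hg.
- rewrite IHg IHh; split=> [[]|hgh]; first exact: ufI.
  by split; apply: ufS hgh => t [].
- rewrite IHg IHh; split=> [[] hg|/ufU[] hg].
  + by apply: ufS hg => t; left.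
  + by apply: ufS hg => t; right.
  + by left.
  + by right.
Qed.

Lemma star_closed_closed_form n m (c : 'I_m -> star R) (f : sform R (n + m)) :
  closed_form f -> star_closed U (fun x => holds_star U (joinv x c) f).
Proof.
move=> cf x /holds_starE /ufC nfx.
pose e t i := joinv x c i t.
have near t : exists eta : R, 0 < eta /\ (~ sat (e t) f ->
    forall e', (forall i, `|e' i - e t i| < eta) -> ~ sat e' f).
  case: (pselect (sat (e t) f)) => [ft|/(not_sat_closed_form_near cf)[eta eta_gt0 near]].
    by exists 1; split=> //; rewrite ltr01.
  by exists eta.
have [eta /all_and2[eta_gt0 eta_near]] := choice near.
exists eta; split=> [|y /uf_forall yx /holds_starE fy]; first exact: ufT.
apply: (uf_notI fy); apply: ufS (ufI nfx yx) => t [nft ytx].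
apply: (eta_near t nft) => i; rewrite /e /joinv; case: (split i) => j //=.
by rewrite subrr normr0.
Qed.

(** * Interpolation along segments *)

Lemma tnegligible_horner_shift (g h : cplx R -> {poly R}) (s eta : star R) d :
  res_pos U eta ->
  (forall t y, (g t).[y] = (g t).[s t] + (y - s t) * (h t).[y]) ->
  (forall j, (j <= d.+1)%N -> tnegligible U (fun t => (g t).[s t + j%:R * eta t])) ->
  forall j, (j <= d)%N ->
    tnegligible U (fun t => (h t).[(s t + eta t) + j%:R * eta t]).
Proof.
move=> eta_pos gh gj j jd.
have j1eta_pos : res_pos U (fun t => j.+1%:R * eta t).
  apply: (res_pos_le _ eta_pos); apply: ufS (res_pos_gt0 eta_pos) => t eta_gt0.
  by rewrite ler_pMl // ler1n.
have g0 : tnegligible U (fun t => (g t).[s t]).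
  by apply: eq_tnegligible (gj 0%N isT); apply: ufT => t; rewrite mul0r addr0.
apply: eq_tnegligible (tnegligibleM (tnegligibleD (gj j.+1 jd) (tnegligibleN g0))
  (tboundedV j1eta_pos)).
apply: ufS (res_pos_gt0 j1eta_pos) => t j1eta_gt0.
set y := s t + eta t + j%:R * eta t.
have -> : s t + j.+1%:R * eta t = y by rewrite /y mulrSr; ring.
rewrite {1}(gh t y) addrAC subrr add0r.
have -> : y - s t = j.+1%:R * eta t by rewrite /y mulrSr; ring.
by rewrite mulrC mulKf // gt_eqF.
Qed.

Lemma tnegligible_horner_progression d (g : cplx R -> {poly R}) (s eta : star R) :
  (forall t, (size (g t) <= d.+1)%N) ->
  tbounded U s -> tbounded U eta -> res_pos U eta ->
  (forall j, (j <= d)%N -> tnegligible U (fun t => (g t).[s t + j%:R * eta t])) ->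
  forall x, tbounded U x -> tnegligible U (fun t => (g t).[x t]).
Proof.
elim: d g s => [|d IH] g s gd s_tb eta_tb eta_pos gj x x_tb.
  apply: eq_tnegligible (gj 0%N isT); apply: ufT => t.
  by rewrite (size1_polyC (gd t)) !hornerC.
have [h /all_and2[hd gh]] := choice (fun t => horner_factor_at (s t) (gd t)).
have g0 : tnegligible U (fun t => (g t).[s t]).
  by apply: eq_tnegligible (gj 0%N isT); apply: ufT => t; rewrite mul0r addr0.
have h_x : tnegligible U (fun t => (h t).[x t]).
  apply: (IH h (fun t => s t + eta t)) => //; first exact: tboundedD.
  exact: tnegligible_horner_shift gh gj.
apply: eq_tnegligible (tnegligibleD g0 (tnegligibleM h_x (tboundedD x_tb (tboundedN s_tb)))).
by apply: ufT => t; rewrite gh mulrC.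
Qed.

Definition segment n (z a : 'I_n -> star R) (lam : star R) : 'I_n -> star R :=
  fun i t => z i t + lam t * (a i t - z i t).

Definition segment_poly n m (z a : 'I_n -> star R) (c : 'I_m -> star R)
    (p : pterm R (n + m)) (t : cplx R) : {poly R} :=
  peval polyC (joinv (fun i => (a i t - z i t)%:P * 'X + (z i t)%:P)
                     (fun j => (c j t)%:P)) p.

Lemma horner_segment_poly n m (z a : 'I_n -> star R) (c : 'I_m -> star R)
    (p : pterm R (n + m)) (lam : star R) t :
  (segment_poly z a c p t).[lam t] = peval_star (joinv (segment z a lam) c) p t.
Proof.
rewrite /segment_poly horner_peval /peval_star /segment; congr (peval _ _ p).
apply: funext => i; rewrite /joinv; case: (split i) => j; last exact: hornerC.
by rewrite hornerMXaddC hornerC addrC mulrC.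
Qed.

Lemma size_segment_poly n m (z a : 'I_n -> star R) (c : 'I_m -> star R)
    (p : pterm R (n + m)) t :
  (size (segment_poly z a c p t) <= (pdeg p).+1)%N.
Proof.
apply: size_peval => i; rewrite /joinv; case: (split i) => j.
  by rewrite size_MXaddC; case: ifP => // _; rewrite ltnS size_polyC_leq1.
exact: leq_trans (size_polyC_leq1 _) _.
Qed.

Lemma segment1 n (z a : 'I_n -> star R) : segment z a (fun=> 1) = a.
Proof. by apply: funext => i; apply: funext => t; rewrite /segment mul1r addrC subrK. Qed.

Lemma not_tnegligible_segment n m (c : 'I_m -> star R) (p : pterm R (n + m))
    (z a : 'I_n -> star R) (eta : star R) :
  tbounded U eta -> res_pos U eta ->
  ~ tnegligible U (peval_star (joinv a c) p) ->
  exists2 k, (k <= pdeg p)%N &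
    ~ tnegligible U (peval_star (joinv (segment z a (fun t => k%:R * eta t)) c) p).
Proof.
(* On the segment, p is a polynomial of degree <= pdeg p in the parameter,
   non-negligible at the parameter 1. *)
move=> eta_tb eta_pos pa; apply: contrapT => none; apply: pa.
have negl_k k : (k <= pdeg p)%N ->
    tnegligible U (fun t => (segment_poly z a c p t).[0 + k%:R * eta t]).
  move=> kd; apply: eq_tnegligible (contrapT (fun h => none (ex_intro2 _ _ k kd h))).
  by apply: ufT => t; rewrite add0r (horner_segment_poly _ _ _ _ (fun t => k%:R * eta t)).
apply: eq_tnegligible (tnegligible_horner_progression (size_segment_poly z a c p)
  (tboundedC 0) eta_tb eta_pos negl_k (tboundedC 1)).
apply: ufT => t; have := horner_segment_poly z a c p (fun=> 1) t.
by rewrite segment1 => <-.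
Qed.

Lemma segment_near n (z a : 'I_n -> star R) d N : tbvec U z -> tbvec U a ->
  exists Q, forall k, (k <= d)%N -> U (fun t => forall i,
    `|segment z a (fun t => k%:R * cnorm t ^+ Q) i t - z i t| <= cnorm t ^+ N).
Proof.
move=> /tbvec_uniform[Nz hz] /tbvec_uniform[Na ha]; set N0 := maxn Nz Na.
exists (N0 + N).+1 => k kd.
apply: ufS (ufI (ufI (hz N0 (leq_maxl _ _)) (ha N0 (leq_maxr _ _)))
  (ufI (uf_mul_cnorm_le1 (d%:R * 2)) uf_cnorm_half)) => t [[zN aN] [dt [t_gt0 _]]] i.
have t_ge0 := ltW t_gt0.
set A := `|a i t - z i t| * cnorm t ^+ N0.
have A_ge0 : 0 <= A by rewrite mulr_ge0 ?exprn_ge0.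
have A_le2 : A <= 2.
  have := aN i; have := zN i; rewrite !ler_invX_mul // => zN0 aN0.
  by apply: le_trans (ler_wpM2r (exprn_ge0 _ t_ge0) (ler_normB _ _)) _; rewrite mulrDl; lra.
rewrite /segment addrC addKr normrM ger0_norm ?mulr_ge0 ?exprn_ge0 //.
have -> : k%:R * cnorm t ^+ (N0 + N).+1 * `|a i t - z i t| =
    cnorm t ^+ N * (k%:R * cnorm t * A) by rewrite /A exprS exprD; ring.
rewrite -[leRHS]mulr1 ler_wpM2l ?exprn_ge0 //.
have KD : k%:R * cnorm t <= d%:R * cnorm t by rewrite ler_wpM2r // ler_nat.
move: dt KD; rewrite mulrAC; set D := d%:R * cnorm t; set K := k%:R * cnorm t.
have : 0 <= K by rewrite mulr_ge0.
nra.
Qed.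

Lemma res_inbox_near n (z w : 'I_n -> star R) (eps : star R) N :
  U (fun t => cnorm t ^+ N < eps t) ->
  U (fun t => forall i, `|w i t - z i t| <= cnorm t ^+ N.+1) -> res_inbox U z eps w.
Proof.
move=> epsN wz i; split; exists N.+1.
all: apply: ufS (ufI (ufI epsN wz) uf_cnorm_half) => t [[eN /(_ i)]].
all: rewrite exprSr => wzN [t_gt0 t_le]; have := exprn_gt0 N t_gt0.
all: have := ler_norm (w i t - z i t); have := ler_norm (- (w i t - z i t)).
all: by rewrite normrN; move: eN wzN; set P := cnorm t ^+ N; nra.
Qed.

Lemma not_tnegligible_in_box n m (c : 'I_m -> star R) (p : pterm R (n + m))
    (a z : 'I_n -> star R) (eps : star R) :
  tbvec U z -> tbvec U a -> res_pos U eps ->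
  ~ tnegligible U (peval_star (joinv a c) p) ->
  exists w, [/\ tbvec U w, res_inbox U z eps w
              & ~ tnegligible U (peval_star (joinv w c) p)].
Proof.
move=> hz ha [N epsN] pa.
have [Q near] := segment_near (pdeg p) N.+1 hz ha.
have [k kd pk] := not_tnegligible_segment z (tbounded_cnorm Q) (res_pos_cnorm Q) pa.
set w := segment z a _ in pk near *; exists w; split=> //.
  move=> i; have wz_tb : tbounded U (fun t => w i t - z i t).
    apply: tbounded_le (tbounded_cnorm N.+1).
    by apply: ufS (near k kd) => t /(_ i) /le_trans; apply; apply: ler_norm.
  apply: eq_tbounded (tboundedD (hz i) wz_tb).
  by apply: ufT => t; rewrite addrCA subrr addr0.
exact: res_inbox_near epsN (near k kd).
Qed.

Lemma res_inbox_lt n (w v : 'I_n -> star R) (e : star R) :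
  res_inbox U w e v -> U (fun t => forall i, `|v i t - w i t| < e t).
Proof.
move=> vw; apply: uf_forall => i; case: (vw i) => [[N1 h1] [N2 h2]].
apply: ufS (ufI (ufI h1 h2) uf_cnorm_half) => t [[l r] [t_gt0 _]].
have := exprn_gt0 N1 t_gt0; have := exprn_gt0 N2 t_gt0.
by rewrite ltr_norml; lra.
Qed.

Lemma not_tnegligible_near n m (c : 'I_m -> star R) (p : pterm R (n + m))
    (w : 'I_n -> star R) :
  tbvec U c -> tbvec U w -> ~ tnegligible U (peval_star (joinv w c) p) ->
  exists2 e, res_pos U e &
    forall v, res_inbox U w e v -> ~ tnegligible U (peval_star (joinv v c) p).
Proof.
move=> hc hw /not_tnegligible[N pwN].
have [K near] := peval_star_lipschitz p N.+1 (tbvec_joinv hw hc).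
exists (fun t => cnorm t ^+ K) => [|v /res_inbox_lt vw pv]; first exact: res_pos_cnorm.
have vwK : U (fun t => forall i, `|joinv v c i t - joinv w c i t| < cnorm t ^+ K).
  apply: ufS (ufI vw uf_cnorm_half) => t [vwt [t_gt0 _]] i.
  by rewrite /joinv; case: (split i) => j //; rewrite subrr normr0 exprn_gt0.
apply: (uf_notI (ufI (ufI pwN (pv N.+1)) (ufI (near _ vwK) uf_cnorm_half))).
apply: ufT => t [[pwNt pvNt] [vw_close [t_gt0 t_le]]].
set pv_t := peval_star _ p t in pvNt vw_close; set pw_t := peval_star _ p t in pwNt vw_close.
have := ler_normD (pw_t - pv_t) pv_t; rewrite subrK distrC.
move: pvNt vw_close; rewrite exprSr; have := exprn_gt0 N t_gt0.
set P := cnorm t ^+ N in pwNt *; nra.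
Qed.

(** * Generic points *)

Lemma res_inbox_refl n (z : 'I_n -> star R) (e : star R) : res_pos U e -> res_inbox U z e z.
Proof. by move=> e_pos i; split; apply: res_pos_le e_pos; apply: ufT => t; lra. Qed.

Lemma res_inbox_le n (w v : 'I_n -> star R) (e1 e : star R) :
  U (fun t => e1 t <= e t) -> res_inbox U w e1 v -> res_inbox U w e v.
Proof.
move=> e1e vw i; case: (vw i) => l r.
by split; [apply: res_pos_le l|apply: res_pos_le r]; apply: ufS e1e => t; lra.
Qed.

Lemma res_inbox_trans n (z w v : 'I_n -> star R) (e1 e2 e : star R) :
  res_inbox U z e1 w -> U (fun t => e1 t + e2 t <= e t) -> res_inbox U w e2 v ->
  res_inbox U z e v.
Proof.
move=> wz e12 vw i; case: (wz i) (vw i) => [l1 r1] [l2 r2]; split.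
  by apply: res_pos_le l1; apply: ufS (ufI e12 (res_pos_gt0 l2)) => t [] /=; lra.
by apply: res_pos_le r1; apply: ufS (ufI e12 (res_pos_gt0 r2)) => t [] /=; lra.
Qed.

Definition res_null n m (c : 'I_m -> star R) (p : pterm R (n + m)) : Prop :=
  forall y, tbvec U y -> tnegligible U (peval_star (joinv y c) p).

Definition generic_atom n m (c : 'I_m -> star R) (p : pterm R (n + m))
    (x : 'I_n -> star R) : Prop :=
  ~ res_null c p -> ~ tnegligible U (peval_star (joinv x c) p).

Fixpoint generic n m (c : 'I_m -> star R) (f : sform R (n + m))
    (x : 'I_n -> star R) : Prop :=
  match f with
  | FEq0 p | FGt0 p => generic_atom c p x
  | FNot g => generic c g x
  | FAnd g h | FOr g h => generic c g x /\ generic c h x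
  end.

Lemma generic_atom_subbox n m (c : 'I_m -> star R) (p : pterm R (n + m))
    (z : 'I_n -> star R) (e : star R) :
  tbvec U c -> tbvec U z -> res_pos U e ->
  exists z', exists2 e', tbvec U z' /\ res_pos U e' &
    forall v, res_inbox U z' e' v -> res_inbox U z e v /\ generic_atom c p v.
Proof.
move=> hc hz e_pos; case: (pselect (res_null c p)) => [null|/existsNP[y /not_implyP[hy py]]].
  by exists z, e => // v ?; split=> // /(_ null).
have [w [hw wz pw]] := not_tnegligible_in_box hz hy (res_pos_half e_pos) py.
have [e1 e1_pos near] := not_tnegligible_near hc hw pw.
exists w, (fun t => Num.min (e1 t) (e t / 2)).
  by split=> //; apply: res_pos_min => //; apply: res_pos_half.
move=> v vw; split.
  2: by move=> _; apply/near/(res_inbox_le _ vw)/ufT => t; rewrite ge_min lexx.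
apply: res_inbox_trans wz _ vw; apply: ufT => t.
have : Num.min (e1 t) (e t / 2) <= e t / 2 by rewrite ge_min lexx orbT.
lra.
Qed.

Lemma generic_subbox n m (c : 'I_m -> star R) (f : sform R (n + m))
    (z : 'I_n -> star R) (e : star R) :
  tbvec U c -> tbvec U z -> res_pos U e ->
  exists z', exists2 e', tbvec U z' /\ res_pos U e' &
    forall v, res_inbox U z' e' v -> res_inbox U z e v /\ generic c f v.
Proof.
move=> hc; elim: f z e => [p|p|g IH|g IHg h IHh|g IHg h IHh] z e hz e_pos /=.
1,2: exact: generic_atom_subbox.
  exact: IH.
all: have [z1 [e1 [hz1 e1_pos] sub1]] := IHg z e hz e_pos.
all: have [z2 [e2 [hz2 e2_pos] sub2]] := IHh z1 e1 hz1 e1_pos.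
all: by exists z2, e2 => // v /sub2[/sub1[]].
Qed.

Lemma not_tnegligible_sign (q : star R) :
  ~ tnegligible U q -> U (fun t => 0 < q t) \/ U (fun t => 0 < - q t).
Proof.
move=> /not_tnegligible[N qN]; apply: ufU.
apply: ufS (ufI qN uf_cnorm_half) => t [+ [t_gt0 _]].
have := exprn_gt0 N t_gt0; rewrite oppr_gt0.
by have [q_lt0|q_gt0|->] := ltrgtP (q t) 0; [right|left|rewrite normr0; lra].
Qed.

Lemma res_posE (q : star R) :
  ~ tnegligible U q -> res_pos U q <-> ~ U (fun t => 0 < - q t).
Proof.
move=> /not_tnegligible[N qN]; split=> [/res_pos_gt0 q_gt0 q_lt0|/ufC q_ge0].
  by apply: (uf_notI q_gt0); apply: ufS q_lt0 => t; rewrite oppr_gt0; lra.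
exists N; apply: ufS (ufI qN q_ge0) => t [qNt].
by rewrite oppr_gt0 => /negP; rewrite -leNgt => /ger0_norm <-.
Qed.

Lemma res_posNE (q : star R) :
  ~ tnegligible U q -> ~ res_pos U q <-> ~ U (fun t => 0 < q t).
Proof.
move=> qnn; split=> [nq q_gt0|nq /res_pos_gt0 //].
apply/nq/(res_posE qnn) => q_lt0.
by apply: (uf_notI q_gt0); apply: ufS q_lt0 => t; rewrite oppr_gt0; lra.
Qed.

Lemma res_eq_peval_joinv n m (c : 'I_m -> star R) (p : pterm R (n + m))
    (x y : 'I_n -> star R) :
  tbvec U c -> tbvec U x -> (forall i, res_eq U (x i) (y i)) ->
  res_eq U (peval_star (joinv x c) p) (peval_star (joinv y c) p).
Proof.
move=> hc hx xy; apply: res_eq_peval (tbvec_joinv hx hc) _ => i.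
by rewrite /joinv; case: (split i) => j //; apply: res_eq_refl.
Qed.

Section Congruence.
Variables (n m : nat) (c : 'I_m -> star R) (x y : 'I_n -> star R).
Hypotheses (hc : tbvec U c) (hx : tbvec U x) (hy : tbvec U y).
Hypothesis xy : forall i, res_eq U (x i) (y i).

Let yx i : res_eq U (y i) (x i) := res_eq_sym (xy i).

Lemma holds_res_cong (f : sform R (n + m)) :
  holds_res U (joinv x c) f <-> holds_res U (joinv y c) f.
Proof.
have pxy p := res_eq_peval_joinv p hc hx xy.
have pyx p := res_eq_peval_joinv p hc hy yx.
elim: f => /= [p|p|g IH|g IHg h IHh|g IHg h IHh].
- by split; apply: tnegligible_res_eq.
- by split; apply: res_pos_res_eq.
- by rewrite IH.
- by rewrite IHg IHh.
- by rewrite IHg IHh.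
Qed.

Lemma generic_cong (f : sform R (n + m)) : generic c f x -> generic c f y.
Proof.
elim: f => /= [p|p|g IH|g IHg h IHh|g IHg h IHh] //.
1,2: by move=> px /px + /(tnegligible_res_eq (res_eq_peval_joinv p hc hy yx)).
all: by case=> /IHg ? /IHh.
Qed.

End Congruence.

Lemma holds_star_bool k (e : 'I_k -> star R) b : holds_star U e (sform_bool k b) <-> b.
Proof.
rewrite /= /peval_star /=; case: b; split=> //.
  by move=> _ h; apply: (uf_notI h); apply: ufT => t; rewrite ltxx.
by move=> h; exfalso; apply: h; apply: ufT => t; rewrite ltr01.
Qed.

(* A closed *R-formula for f (b = true) or for its negation (b = false). Null
   atoms become constants; the others are non-negligible at generic points, so
   there p = 0 fails and the strict signs p > 0, p < 0 in R_res agree with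
   p >= 0, p <= 0 in *R. *)
Fixpoint lift_form n m (c : 'I_m -> star R) (f : sform R (n + m)) (b : bool)
    : sform R (n + m) :=
  match f with
  | FEq0 p => if pselect (res_null c p) then sform_bool _ b
              else if b then FAnd (FNot (FGt0 p)) (FNot (FGt0 (POpp p)))
              else sform_bool _ true
  | FGt0 p => if pselect (res_null c p) then sform_bool _ (~~ b)
              else FNot (FGt0 (if b then POpp p else p))
  | FNot g => lift_form c g (~~ b)
  | FAnd g h => let g' := lift_form c g b in let h' := lift_form c h b in
                if b then FAnd g' h' else FOr g' h'
  | FOr g h => let g' := lift_form c g b in let h' := lift_form c h b in
               if b then FOr g' h' else FAnd g' h'
  end.

Lemma closed_form_lift n m (c : 'I_m -> star R) (f : sform R (n + m)) b :
  closed_form (lift_form c f b).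
Proof.
elim: f b => /= [p|p|g IH|g IHg h IHh|g IHg h IHh] b.
1,2: by case: pselect; case: b.
  exact: IH.
all: by case: b => /=; rewrite IHg IHh.
Qed.

Lemma holds_star_lift n m (c : 'I_m -> star R) (f : sform R (n + m)) (x : 'I_n -> star R) :
  tbvec U x -> generic c f x -> forall b,
  holds_star U (joinv x c) (lift_form c f b) <->
    (if b then holds_res U (joinv x c) f else ~ holds_res U (joinv x c) f).
Proof.
move=> hx; elim: f => [p|p|g IH|g IHg h IHh|g IHg h IHh] /= gen b.
- case: pselect => [null|nnull].
    by rewrite holds_star_bool; have := null x hx; case: b.
  have px := gen nnull; case: b; rewrite ?holds_star_bool //=.
  by split=> [[pn ppos]|//]; case: (not_tnegligible_sign px).
- case: pselect => [null|nnull].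
    rewrite holds_star_bool; have /tnegligible_res_pos := null x hx.
    by case: b.
  have px := gen nnull; symmetry; case: b.
    exact: res_posE.
  exact: res_posNE.
- rewrite IH //; case: b => //=.
  by split=> [hg /(_ hg)|/contrapT].
- case: gen => gg gh; case: b => /=; rewrite (IHg gg) (IHh gh) //.
  by rewrite not_andP; split=> [[]|[]] hn; [left|right|left|right].
- case: gen => gg gh; case: b => /=; rewrite (IHg gg) (IHh gh) //.
  by rewrite not_orP.
Qed.

(** * The lifted set *)

Lemma not_uf_gt0E (a : star R) : ~ U (fun t => 0 < a t) <-> U (fun t => a t <= 0).
Proof.
split=> [/ufC|a_le0 a_gt0]; first by apply: ufS => t; rewrite ltNge => /negP/negbNE.
by apply: (uf_notI a_gt0); apply: ufS a_le0 => t; lra.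
Qed.

Lemma holds_star_box n k (xi : 'I_n -> 'I_k) (iW : 'I_k) (s : seq 'I_n)
    (e : 'I_k -> star R) :
  holds_star U e (box_form xi iW s) <->
    forall i, i \in s -> U (fun t => `|e (xi i) t| <= e iW t).
Proof.
elim: s => [|j s IH]; first by rewrite holds_star_bool.
rewrite /= IH !not_uf_gt0E /peval_star /=; split=> [[[hj hj'] hs] i|h].
  rewrite inE => /orP[/eqP->|/hs//]; apply: ufS (ufI hj hj') => t.
  by rewrite !subr_le0 ler_norml lerNl => -[-> ->].
split=> [|i si]; last by apply: h; rewrite inE si orbT.
by split; apply: ufS (h j (mem_head j s)) => t; rewrite subr_le0 ler_norml lerNl => /andP[].
Qed.

Lemma res_dim_lt_nongeneric n m (c : 'I_m -> star R) (f : sform R (n + m))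
    (S : ('I_n -> star R) -> Prop) :
  tbvec U c -> (forall y, tbvec U y -> S y -> ~ generic c f y) -> res_dim_lt U S n.
Proof.
move=> hc nongen s s_inj [z [eps [hz [_ [eps_pos zS]]]]].
pose si := invF s_inj.
have [z' [e' [hz' e'_pos] sub]] := generic_subbox f hc (fun i => hz (si i)) eps_pos.
have [z'_box z'_gen] := sub z' (res_inbox_refl z' e'_pos).
have z's_box : res_inbox U z eps (fun j => z' (s j)).
  by move=> j; have := z'_box (s j); rewrite /si invF_f.
have [y [hy [Sy ys]]] := zS _ (fun j => hz' (s j)) z's_box.
apply: (nongen y hy Sy); apply: (generic_cong hc hy _ z'_gen) => i.
by have := res_eq_sym (ys (si i)); rewrite /si f_invF.
Qed.

Lemma uf_norm_le_res_bound (M y : star R) :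
  ~ res_lt U M y -> ~ res_lt U y (fun t => - M t) ->
  U (fun t => `|y t| <= `|M t| + 1).
Proof.
move=> yM My.
have le1 (a : star R) : ~ res_pos U a -> U (fun t => a t <= 1).
  move=> na; apply: ufS (ufC (fun h => na (ex_intro _ 0%N h))) => t.
  by rewrite expr0 ltNge => /negP/negbNE.
apply: ufS (ufI (le1 _ yM) (le1 _ My)) => t [].
by have := ler_norm (M t); have := ler_norm (- M t); rewrite normrN ler_norml; lra.
Qed.

Section Lift.
Variables (n m : nat) (c : 'I_m -> star R) (f : sform R (n + m)) (M : star R).
Hypotheses (hc : tbvec U c) (hM : tbounded U M).

(* The box radius |M| + 1 lies in *R, so it enters as an extra parameter. *)
Let params : 'I_(m + 1) -> star R := joinv c (fun _ => fun t => `|M t| + 1).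
Let iW : 'I_(n + (m + 1)) := rshift n (rshift m ord0).
Let r (i : 'I_(n + m)) : 'I_(n + (m + 1)) :=
  match split i with inl j => lshift (m + 1) j | inr j => rshift n (lshift 1 j) end.
Let lifted_form : sform R (n + (m + 1)) :=
  FAnd (box_form (lshift (m + 1)) iW (enum 'I_n)) (sren r (lift_form c f true)).

Definition lifted_set (x : 'I_n -> star R) : Prop :=
  holds_star U (joinv x params) lifted_form.

Lemma lifted_setE x : lifted_set x <->
  (forall i, U (fun t => `|x i t| <= `|M t| + 1)) /\
  holds_star U (joinv x c) (lift_form c f true).
Proof.
have joinv_r : joinv x params \o r = joinv x c.
  apply: funext => i; rewrite /comp /r [RHS]/joinv.
  by case: (split i) => j; rewrite ?joinv_lshift // joinv_rshift /params joinv_lshift.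
rewrite /lifted_set /lifted_form /= holds_star_box holds_star_sren joinv_r /iW joinv_rshift.
rewrite /params joinv_rshift.
split=> -[box ?]; split=> // i; last by rewrite joinv_lshift.
by move: (box i); rewrite mem_enum joinv_lshift; apply.
Qed.

Lemma lifted_set_tbvec x : lifted_set x -> tbvec U x.
Proof.
have M1_tb : tbounded U (fun t => `|M t| + 1).
  by apply: tboundedD (tboundedC 1); apply: tbounded_le hM; apply: ufT => t; rewrite normr_id.
move=> /lifted_setE[box _] i; apply: tbounded_le M1_tb.
by apply: ufS (box i) => t /le_trans; apply; apply: ler_norm.
Qed.

Lemma lifted_set_definable : star_definable U lifted_set.
Proof. by exists (m + 1)%N, lifted_form, params. Qed.

Lemma lifted_set_compact : star_def_compact U lifted_set.
Proof.
split; last by exists (fun t => `|M t| + 1) => x /lifted_setE[].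
by apply: star_closed_closed_form; rewrite /= closed_form_box closed_form_sren closed_form_lift.
Qed.

Lemma reduction_lifted_setE y : tbvec U y -> generic c f y ->
  (holds_res U (joinv y c) f -> forall i, U (fun t => `|y i t| <= `|M t| + 1)) ->
  reduction U lifted_set y <-> holds_res U (joinv y c) f.
Proof.
move=> hy gen box; split=> [[x [Ex xy]]|fy].
  have hx := lifted_set_tbvec Ex.
  have genx := generic_cong hc hx (fun i => res_eq_sym (xy i)) gen.
  have [_ /(holds_star_lift hx genx) fx] := (lifted_setE x).1 Ex.
  exact: (holds_res_cong hc hx hy xy f).1 fx.
exists y; split=> [|i]; last exact: res_eq_refl.
by apply/lifted_setE; split; [exact: box|apply/(holds_star_lift hy gen)].
Qed.

End Lift.

End Ultrapower.

Theorem corollary3p7 (R : realType) (U : (cplx R -> Prop) -> Prop)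
  (hU : is_ultrafilter U) (hnp : non_principal U) (h0 : converges_to_0 U)
  (n : nat) (K : ('I_n -> star R) -> Prop)
  (hKdef : res_definable U K) (hKcpt : res_def_compact U K) :
  exists E : ('I_n -> star R) -> Prop,
    [/\ star_definable U E, star_def_compact U E,
        (forall x, E x -> tbvec U x)
      & res_dim_lt U (symdiff (reduction U E) K) n].
Proof.
have [m [f [c [hc Kf]]]] := hKdef; have [_ [M [hM Kbox]]] := hKcpt.
exists (lifted_set U c f M); split.
- exact: lifted_set_definable.
- exact: lifted_set_compact.
- exact: lifted_set_tbvec.
apply: (res_dim_lt_nongeneric hU hnp h0 (f := f) hc) => y hy + gen.
have box : holds_res U (joinv y c) f -> forall i, U (fun t => `|y i t| <= `|M t| + 1).
  by move=> /(Kf y hy) Ky i; have [yM My] := Kbox y hy Ky i; exact: uf_norm_le_res_bound.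
rewrite /symdiff (reduction_lifted_setE hU hnp h0 hc hM hy gen box) (Kf y hy).
tauto.
Qed.
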